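(* Let $G$ be a connected graph and let $v\in V(G)$ be a cut-vertex such that $G-v$ has exactly two connected components $G_1$ and $G_2$. If $G[V(G_i)\cup\{v\}]$ is isomorphic to a path for $i=1$ or for $i=2$, then $v$ is not a basis forced vertex of $G$.
   Context: All graphs are finite and simple. For vertices $u,v$ of a connected graph $G$, $d(u,v)$ is the length of a shortest $u$–$v$ path. A set $R\subseteq V(G)$ is a resolving set if for all distinct $x,y\in V(G)$ there is $r\in R$ with $d(r,x)\neq d(r,y)$. The metric dimension $\dim(G)$ is the minimum cardinality of a resolving set, and a resolving set of cardinality $\dim(G)$ is a metric basis. A vertex is a basis forced vertex if it belongs to every metric basis of $G$. A cut-vertex is a vertex $v$ such that $G-v$ is disconnected; $G[S]$ denotes the subgraph induced by $S$. *)

(* A finite simple graph is a symmetric irreflexive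
   relation e : rel T on a finite type T of vertices. *)
From mathcomp Require Import all_boot.
Set Implicit Arguments. Unset Strict Implicit. Unset Printing Implicit Defensive.

Section Graph.
Variables (T : finType) (e : rel T).

Definition connected_graph : Prop := forall x y : T, connect e x y.

Definition nball (x : T) (k : nat) : {set T} :=
  iter k (fun S => S :|: [set y | [exists z in S, e z y]]) [set x].

(* d(x,y): the least k with y reachable from x in at most k steps, i.e.
   the length of a shortest x--y path (for connected graphs, k < #|T|). *)
Definition dist (x y : T) : nat :=
  find (fun k => y \in nball x k) (iota 0 #|T|).

Definition resolving (R : {set T}) : bool :=
  [forall x, forall y, (x != y) ==> [exists r in R, dist r x != dist r y]].

(* metric dimension: minimum cardinality of a resolving set
   (setT is always resolving since d(x,x) = 0 <> d(x,y) for x <> y) *)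
Definition metric_dim : nat :=
  #|[arg min_(R < [set: T] | resolving R) #|R|]|.

Definition metric_basis (R : {set T}) : bool :=
  resolving R && (#|R| == metric_dim).

Definition basis_forced (v : T) : Prop :=
  forall R : {set T}, metric_basis R -> v \in R.

Definition del_rel (v : T) : rel T := [rel x y | [&& e x y, x != v & y != v]].

Definition component_del (v : T) (C : {set T}) : Prop :=
  exists x, x != v /\ C = [set y | (y != v) && connect (del_rel v) x y].

Definition two_components (v : T) (V1 V2 : {set T}) : Prop :=
  [/\ component_del v V1, component_del v V2, V1 != V2 &
      forall C, component_del v C -> C = V1 \/ C = V2].

(* the induced subgraph G[S] is isomorphic to a path: S can be listed
   without repetition as s so that two vertices of S are adjacent iff they
   are consecutive in s *)
Definition induced_path (S : {set T}) : Prop :=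
  exists s : seq T, [/\ uniq s, [set x in s] = S &
    forall x y, x \in s -> y \in s ->
      e x y = ((index x s).+1 == index y s) || ((index y s).+1 == index x s)].

End Graph.

From mathcomp Require Import all_boot zify.
Set Implicit Arguments. Unset Strict Implicit. Unset Printing Implicit Defensive.

(* Say G[V1 + v] is the path. As V1 is connected in G - v, the vertex v is an
   end of this path; let w be the other end and k its length. Only v has
   neighbours off the path, so d(v,y) + d(w,y) = k for y on the path and
   d(w,y) = k + d(v,y) for y off it. Hence d(v,y) = |d(w,y) - k| is a function
   of d(w,y), and replacing v by w in a metric basis containing v gives a
   resolving set of no larger size, i.e. a metric basis avoiding v. *)

Section Distance.
Variables (T : finType) (e : rel T).
Hypothesis e_sym : symmetric e.
Hypothesis Gconn : connected_graph e.

Lemma nball0 x y : (y \in nball e x 0) = (y == x).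
Proof. by rewrite /nball /= inE. Qed.

Lemma nballS x k y :
  (y \in nball e x k.+1) = (y \in nball e x k) || [exists z in nball e x k, e z y].
Proof. by rewrite /nball iterS !inE. Qed.

Lemma nball_le x j k : j <= k -> {subset nball e x j <= nball e x k}.
Proof.
elim: k => [|k IHk]; first by rewrite leqn0 => /eqP->.
rewrite leq_eqVlt => /orP[/eqP-> //|/IHk sub y /sub yk].
by rewrite nballS yk.
Qed.

Lemma last_path_nball x p : path e x p -> last x p \in nball e x (size p).
Proof.
elim/last_ind: p => [|p z IHp]; first by rewrite nball0.
rewrite rcons_path last_rcons size_rcons nballS => /andP[/IHp xp ez].
by apply/orP; right; apply/existsP; exists (last x p); rewrite xp.
Qed.

Lemma nball_card x y : y \in nball e x #|T|.-1.
Proof.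
have /connectP[p /shortenP[q xq uq _] ->] := Gconn x y.
apply: nball_le (last_path_nball xq).
by have := max_card (mem (x :: q)); rewrite (card_uniqP uq) /=; case: #|T|.
Qed.

Lemma mem_nball x y k : (y \in nball e x k) = (dist e x y <= k).
Proof.
have has_ball : has (fun k => y \in nball e x k) (iota 0 #|T|).
  apply/hasP; exists #|T|.-1; last exact: nball_card.
  have T_gt0 : 0 < #|T| by apply/card_gt0P; exists x.
  by rewrite mem_iota; lia.
have dist_lt : dist e x y < #|T| by move: has_ball; rewrite has_find size_iota.
have y_dist : y \in nball e x (dist e x y).
  by have := nth_find 0 has_ball; rewrite nth_iota.
apply/idP/idP => [yk|]; last by move/nball_le; apply.
rewrite leqNgt; apply/negP => /[dup] kd /(before_find 0).
by rewrite nth_iota ?add0n ?yk //; apply: ltn_trans kd dist_lt.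
Qed.

Lemma distxx x : dist e x x = 0.
Proof. by apply/eqP; rewrite -leqn0 -mem_nball nball0. Qed.

Lemma dist_eq0 x y : (dist e x y == 0) = (x == y).
Proof. by rewrite -leqn0 -mem_nball nball0 eq_sym. Qed.

Lemma dist_edge x a b : e a b -> dist e x b <= (dist e x a).+1.
Proof.
move=> eab; rewrite -mem_nball nballS; apply/orP; right.
by apply/existsP; exists a; rewrite mem_nball leqnn.
Qed.

Lemma edge_lipschitz_le_dist (f : T -> nat) x y :
  (forall a b, e a b -> f b <= (f a).+1) -> f y <= f x + dist e x y.
Proof.
move=> f_lip; have : y \in nball e x (dist e x y) by rewrite mem_nball.
move: (dist e x y) => k; elim: k y => [|k IHk] y; first by rewrite nball0 addn0 => /eqP->.
rewrite nballS => /orP[/IHk|/existsP[z /andP[/IHk fz /f_lip]]]; lia.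
Qed.

Lemma dist_triangle x y z : dist e x z <= dist e x y + dist e y z.
Proof. by apply: edge_lipschitz_le_dist => a b; apply: dist_edge. Qed.

Lemma dist_path_through x q y : path e x q -> y \in x :: q ->
  dist e x y + dist e y (last x q) <= size q.
Proof.
move=> xq yq; case/splitPl: yq xq => q1 q2 q1y; rewrite cat_path last_cat q1y size_cat.
case/andP=> /last_path_nball xq1 /last_path_nball yq2.
by apply: leq_add; rewrite -mem_nball // -q1y.
Qed.

Lemma distC x y : dist e x y = dist e y x.
Proof.
suff le_dist a b : dist e a b <= dist e b a by apply/eqP; rewrite eqn_leq !le_dist.
have := @edge_lipschitz_le_dist (dist e ^~ b) b a; rewrite distxx; apply.
move=> c d ecd; apply: leq_trans (dist_triangle d c b) _.
have edc : e d c by rewrite e_sym.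
by have := dist_edge d edc; rewrite distxx => dc; rewrite -add1n leq_add2r.
Qed.

End Distance.

Section Resolving.
Variables (T : finType) (e : rel T).
Hypothesis Gconn : connected_graph e.

Lemma resolvingT : resolving e [set: T].
Proof.
apply/forallP => x; apply/forallP => y; apply/implyP => xy; apply/existsP.
by exists x; rewrite in_setT distxx // eq_sym dist_eq0.
Qed.

Lemma metric_dim_min R : resolving e R -> metric_dim e <= #|R|.
Proof.
by rewrite /metric_dim; case: arg_minnP => [|B _ minB]; [exact: resolvingT | apply: minB].
Qed.

Lemma metric_basis_exists : exists R, metric_basis e R.
Proof.
rewrite /metric_basis /metric_dim.
by case: arg_minnP => [|B resB _]; [exact: resolvingT | exists B; rewrite resB eqxx].
Qed.

Lemma resolving_replace R r w : resolving e R -> r \in R ->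
  (forall x y, dist e w x = dist e w y -> dist e r x = dist e r y) ->
  resolving e (w |: R :\ r).
Proof.
move=> /forallP resR rR w_det; apply/forallP => x; apply/forallP => y.
apply/implyP => xy; have /implyP/(_ xy)/existsP[u /andP[uR dxy]] := forallP (resR x) y.
apply/existsP; case: (eqVneq u r) dxy => [-> dxy|ur dxy].
  by exists w; rewrite setU11; apply: contra dxy => /eqP/w_det->.
by exists u; rewrite !inE ur uR dxy orbT.
Qed.

Lemma not_basis_forced_of_dist_determined v w : w != v ->
  (forall x y, dist e w x = dist e w y -> dist e v x = dist e v y) ->
  ~ basis_forced e v.
Proof.
move=> wv w_det forced.
have [R /[dup] basisR /andP[resR /eqP cardR]] := metric_basis_exists.
have vR := forced R basisR.
have resR' := resolving_replace resR vR w_det.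
have : v \in w |: R :\ v.
  apply: forced; rewrite /metric_basis resR' eqn_leq metric_dim_min // andbT -cardR.
  by rewrite cardsU1 (cardsD1 v R) vR leq_add2r leq_b1.
by rewrite !inE eqxx eq_sym (negbTE wv).
Qed.

End Resolving.

Lemma index_rev (T : eqType) (s : seq T) y :
  uniq s -> y \in s -> index y (rev s) = size s - (index y s).+1.
Proof.
move=> us ys; have := index_mem y s; rewrite ys.
move: (index y s) (nth_index y ys) => i nth_i i_lt.
have j_lt : size s - i.+1 < size s by lia.
have nth_y : nth y (rev s) (size s - i.+1) = y.
  by rewrite nth_rev // (_ : size s - (size s - i.+1).+1 = i) //; lia.
by rewrite -{1}nth_y index_uniq ?size_rev ?rev_uniq.
Qed.

Section PathEnumeration.
Variables (T : finType) (e : rel T).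
Hypothesis e_sym : symmetric e.
Implicit Types (s q : seq T) (v x y : T).

Definition path_enumeration (s : seq T) : Prop :=
  uniq s /\ {in s &, forall x y,
    e x y = ((index x s).+1 == index y s) || ((index y s).+1 == index x s)}.

Definition separated_by (v : T) (s : seq T) : Prop :=
  forall a b, a \in s -> b \notin s -> e a b -> a = v.

Lemma path_enumeration_rev s : path_enumeration s -> path_enumeration (rev s).
Proof.
move=> [us adj]; split=> [|x y]; first by rewrite rev_uniq.
rewrite !mem_rev => xs ys; rewrite adj // !index_rev //.
have := index_mem x s; have := index_mem y s; rewrite xs ys.
move: (index x s) (index y s) (size s) => i j n jn i_n.
by apply/orP/orP => -[/eqP ?|/eqP ?]; [right|left|right|left]; apply/eqP; lia.
Qed.

Lemma path_enumeration_path x q : path_enumeration (x :: q) -> path e x q.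
Proof.
move=> [uq adj]; apply/(pathP x) => i iq.
have i_lt : i < size (x :: q) by apply: ltnW.
rewrite -[nth x q i]/(nth x (x :: q) i.+1) adj ?mem_nth // !index_uniq //.
by rewrite eqxx.
Qed.

Lemma index_eq0_behead s v : v \in s -> index v s = 0 -> s = v :: behead s.
Proof. by case: s => //= x q _; case: eqP => // ->. Qed.

Lemma del_rel_sym v : symmetric (del_rel e v).
Proof. by move=> a b; rewrite /del_rel /= e_sym [(b != v) && _]andbC. Qed.

Lemma separated_path_end s v :
  path_enumeration s -> separated_by v s -> v \in s ->
  {in [predD1 s & v] &, forall a b, connect (del_rel e v) a b} ->
  index v s = 0 \/ index v s = (size s).-1.
Proof.
move=> [us adj] sep vs conn; set j := index v s.
have j_lt : j < size s by rewrite index_mem.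
have [|j_gt0] := posnP j; first by left.
have [j_last|j1_lt] : j = (size s).-1 \/ j.+1 < size s by lia.
  by right.
exfalso; pose left_of := [pred y | (y \in s) && (index y s < j)].
have left_closed : closed (del_rel e v) left_of.
  apply: (intro_closed (sym_connect_sym (@del_rel_sym v))).
  move=> y z /and3P[eyz yv zv] /andP[ys yj].
  have zs : z \in s by apply: contraT => zs; move/eqP: yv; case; exact: sep eyz.
  have zj : index z s != j.
    by apply: contraNneq zv => /(congr1 (nth v s)); rewrite /j !nth_index // => ->.
  rewrite inE zs /=; move: eyz zj yj; rewrite adj // => /orP[] /eqP; lia.
set a := nth v s j.-1; set b := nth v s j.+1.
have [a_lt b_lt] : j.-1 < size s /\ j.+1 < size s by lia.
have [ia ib] : index a s = j.-1 /\ index b s = j.+1 by rewrite !index_uniq.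
have [a_s b_s] : a \in s /\ b \in s by rewrite !mem_nth.
have av : a != v by apply/eqP=> a_v; move: ia; rewrite a_v -/j; lia.
have bv : b != v by apply/eqP=> b_v; move: ib; rewrite b_v -/j; lia.
have := closed_connect left_closed (conn a b _ _); rewrite !inE a_s b_s av bv ia ib.
move=> /(_ isT isT); lia.
Qed.

End PathEnumeration.

Section PendantPath.
Variables (T : finType) (e : rel T).
Hypotheses (e_sym : symmetric e) (Gconn : connected_graph e).
Variables (v : T) (p : seq T).
Hypotheses (p_enum : path_enumeration e (v :: p)) (p_sep : separated_by e v (v :: p)).

Local Notation w := (last v p).
Local Notation k := (size p).

(* The distance to w as seen along the path, continued beyond v; it grows by
   at most one along an edge because only v has neighbours off the path. *)
Lemma pendant_dist_lower y :
  (if y \in v :: p then k - index y (v :: p) else k + dist e v y) <= dist e w y.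
Proof.
have [up adj] := p_enum.
have := @edge_lipschitz_le_dist _ _ Gconn
  (fun y => if y \in v :: p then k - index y (v :: p) else k + dist e v y) w y.
rewrite mem_last index_last // subnn; apply=> a b eab.
have eba : e b a by rewrite e_sym.
case: ifP => bs; case: ifP => as_.
- by move: eab; rewrite adj // => /orP[] /eqP; lia.
- by rewrite (p_sep bs (negbT as_) eba) index_head; lia.
- have := dist_edge Gconn v eab.
  by rewrite (p_sep as_ (negbT bs) eab) distxx // index_head; lia.
- by have := dist_edge Gconn v eab; lia.
Qed.

Lemma pendant_dist_on_path y : y \in v :: p -> dist e v y + dist e w y = k.
Proof.
move=> ys; apply/eqP; rewrite eqn_leq; apply/andP; split.
  rewrite (distC e_sym Gconn w).
  exact: dist_path_through (path_enumeration_path p_enum) ys.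
have := pendant_dist_lower v; rewrite mem_head index_head subn0 => k_le.
by rewrite addnC (distC e_sym Gconn v); apply: leq_trans k_le (dist_triangle Gconn w y v).
Qed.

Lemma pendant_dist_off_path y : y \notin v :: p -> dist e w y = k + dist e v y.
Proof.
move=> ys; apply/eqP; rewrite eqn_leq; apply/andP; split; last first.
  by have := pendant_dist_lower y; rewrite (negbTE ys).
have := pendant_dist_on_path (mem_head v p); rewrite distxx // add0n => <-.
exact: dist_triangle.
Qed.

(* [dist v y = |dist w y - k|], written with truncated subtraction *)
Lemma pendant_dist_head y : dist e v y = (k - dist e w y) + (dist e w y - k).
Proof.
case: (boolP (y \in v :: p)) => [/pendant_dist_on_path|/pendant_dist_off_path]; lia.
Qed.

Lemma pendant_path_not_forced : p != [::] -> ~ basis_forced e v.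
Proof.
move=> p_nil; apply: (not_basis_forced_of_dist_determined Gconn (w := w)).
  have [/andP[vp _] _] := p_enum.
  move: p_nil vp; case: p => // x q _ vq.
  by apply: contraNneq vq => <-; exact: (mem_last x q).
by move=> x y dxy; rewrite !pendant_dist_head dxy.
Qed.

End PendantPath.

Section Component.
Variables (T : finType) (e : rel T).
Hypotheses (e_sym : symmetric e) (Gconn : connected_graph e).
Variables (v : T) (C : {set T}).
Hypothesis C_comp : component_del e v C.

Lemma component_del_connect : {in C &, forall a b, connect (del_rel e v) a b}.
Proof.
have [x [_ ->]] := C_comp; move=> a b; rewrite !inE => /andP[_ xa] /andP[_ xb].
by apply: connect_trans xb; rewrite (sym_connect_sym (del_rel_sym e_sym v)).
Qed.

Lemma component_del_closed a b : a \in C -> e a b -> b != v -> b \in C.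
Proof.
have [x [_ ->]] := C_comp; rewrite !inE => /andP[av xa] eab bv.
rewrite bv (connect_trans xa) // connect1 //.
by rewrite /del_rel /= eab av bv.
Qed.

Lemma component_path_not_forced : induced_path e (v |: C) -> ~ basis_forced e v.
Proof.
move=> [s [us s_C s_adj]]; have s_enum : path_enumeration e s by [].
have mem_s y : (y \in s) = (y == v) || (y \in C) by rewrite -in_setU1 -s_C inE.
have vs : v \in s by rewrite mem_s eqxx.
have s_sep : separated_by e v s.
  move=> a b; rewrite !mem_s => /orP[/eqP //|aC] /norP[bv bC] eab.
  by rewrite (component_del_closed aC eab bv) in bC.
have s_conn : {in [predD1 s & v] &, forall a b, connect (del_rel e v) a b}.
  move=> a b; rewrite !inE !mem_s => /andP[av] + /andP[bv].
  by rewrite (negbTE av) (negbTE bv); apply: component_del_connect.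
have [x [xv xC]] : exists x, x != v /\ x \in C.
  by have [x [xv ->]] := C_comp; exists x; rewrite inE xv connect0.
suff [p [p_enum p_sep xp]] : exists p,
    [/\ path_enumeration e (v :: p), separated_by e v (v :: p) & x \in v :: p].
  apply: (pendant_path_not_forced e_sym Gconn p_enum p_sep).
  by apply: contraTneq xp => ->; rewrite mem_seq1.
have [iv0|iv_last] := separated_path_end e_sym s_enum s_sep vs s_conn.
  by exists (behead s); rewrite -(index_eq0_behead vs iv0) mem_s xC orbT.
have rev_head : rev s = v :: behead (rev s).
  apply: index_eq0_behead; first by rewrite mem_rev.
  by apply/eqP; rewrite index_rev // iv_last subn_eq0 leqSpred.
exists (behead (rev s)); rewrite -rev_head mem_rev mem_s xC orbT; split=> //.
  exact: path_enumeration_rev.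
by move=> a b; rewrite !mem_rev; apply: s_sep.
Qed.

End Component.

Theorem theorem2 (T : finType) (e : rel T)
  (e_sym : symmetric e) (e_irr : irreflexive e)
  (Gconn : connected_graph e) (v : T) (V1 V2 : {set T})
  (Hcomp : two_components e v V1 V2)
  (Hpath : induced_path e (v |: V1) \/ induced_path e (v |: V2)) :
  ~ basis_forced e v.
Proof.
have [V1_comp V2_comp _ _] := Hcomp.
case: Hpath => [V1_path|V2_path].
  exact: (component_path_not_forced e_sym Gconn V1_comp V1_path).
exact: (component_path_not_forced e_sym Gconn V2_comp V2_path).
Qed.
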